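(* Let $n\ge1$ and let $G$ be a compact group which is not nilpotent of class at most $n$. Then $d^{(n)}(G)\le\frac{2^{n+2}-3}{2^{n+2}}$.
   Context: For a compact group $X$, $\mu_X$ denotes its normalized Haar measure and $\mu_X^m$ the product measure on $X^m$. Commutators: $[x,y]=x^{-1}y^{-1}xy$, $[x_1,\dots,x_{k+1}]=[[x_1,\dots,x_k],x_{k+1}]$. For a compact group $X$, $d^{(n)}(X)=\mu_X^{n+1}(\{(x_1,\dots,x_{n+1})\in X^{n+1}: [x_1,\dots,x_{n+1}]=1\})$. *)

From HB Require Import structures.
From mathcomp Require Import all_boot all_order all_algebra.
From mathcomp Require Import all_classical all_reals all_analysis.

Set Implicit Arguments.
Unset Strict Implicit.
Unset Printing Implicit Defensive.

Import Order.TTheory GRing.Theory Num.Theory.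

Local Open Scope classical_set_scope.

(* A type carrying a (possibly infinite) group structure (mathcomp's
   monoid.v [groupType]) and a topology (plus an irrelevant default point,
   required by mathcomp-analysis to build the Borel measurable space). *)
HB.structure Definition TopGroup := {G of Group G & Topological G & Pointed G}.
Notation topGroupType := TopGroup.type.

Definition compact_group (G : topGroupType) : Prop :=
  [/\ continuous (fun p : G * G => monoid.mul p.1 p.2),
      continuous (@monoid.inv G),
      hausdorff_space G &
      compact [set: G] ].

Notation borelType G := (g_sigma_algebraType (@open G)).

Definition normalized_haar (R : realType) (G : topGroupType)
    (mu : measure (borelType G) R) : Prop :=
  [/\ mu [set: borelType G] = 1%E,
      (forall (g : G) (A : set (borelType G)), measurable A ->
          mu [set monoid.mul g x | x in A] = mu A) &
      (forall A : set (borelType G), measurable A ->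
          mu A = ereal_inf [set mu U | U in [set U : set G | open U /\ A `<=` U]])].

Definition is_subgroup (G : groupType) (H : set G) : Prop :=
  [/\ H (@monoid.one G),
      (forall x y, H x -> H y -> H (monoid.mul x y)) &
      (forall x, H x -> H (monoid.inv x))].

Definition subgroup_gen (G : groupType) (A : set G) : set G :=
  \bigcap_(H in [set H : set G | is_subgroup H /\ A `<=` H]) H.

(* Lower central series: lower_central G k = gamma_(k+1)(G), i.e.
   gamma_1 = G, gamma_(k+1) = [gamma_k, G]. *)
Fixpoint lower_central (G : groupType) (k : nat) : set G :=
  if k is k'.+1 then
    subgroup_gen [set commg x y | x in @lower_central G k' & y in [set: G]]
  else [set: G].

Definition nilpotent_class_le (G : groupType) (n : nat) : Prop :=
  @lower_central G n = [set @monoid.one G].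

(* Left-normed commutator [x1, ..., xk] = [[x1, ..., x_(k-1)], xk]
   with commg x y = x^-1 y^-1 x y; the empty sequence gives 1. *)
Definition left_commutator (G : groupType) (s : seq G) : G :=
  if s is x :: s' then foldl (@commg G) x s' else @monoid.one G.

(* Iterated integral  int ... int f(x1, ..., xk) dmu(xk) ... dmu(x1)
   This is the integral against the product (Radon) measure mu^k. *)
Fixpoint iter_integral (R : realType) (G : topGroupType)
    (mu : measure (borelType G) R) (k : nat)
    (f : seq G -> \bar R) : \bar R :=
  if k is k'.+1 then
    (\int[mu]_(x in [set: borelType G])
        iter_integral mu k' (fun s => f (x :: s)))%E
  else f [::].

Definition dn (R : realType) (G : topGroupType)
    (mu : measure (borelType G) R) (n : nat) : \bar R :=
  iter_integral mu n.+1
    (fun s => ((\1_[set t : seq G | left_commutator t = @monoid.one G] s : R)%:E)).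

(** Let ζ_m be the set of y with [y, x_1, ..., x_m] = 1 for all x_i; this is
    the m-th term of the upper central series, a closed normal subgroup.  For
    y ∉ ζ_(k+1) there is g with [y, g] ∉ ζ_k, so the closed subgroup
    {x | [y, x] ∈ ζ_k} is proper and has Haar measure at most 1/2.  Integrating
    over x_1 gives by induction on k that [y, x_1, ..., x_k] = 1 has probability
    at most 1 - 2^-k whenever y ∉ ζ_k.  If G is not nilpotent of class at most
    n = m + 1, pick y ∉ ζ_n: then ζ_n ⊊ {x | [y, x] ∈ ζ_m} ⊊ G, so ζ_n has
    measure at most 1/4, and
    d^(n)(G) <= μ(ζ_n) + (1 - μ(ζ_n)) (1 - 2^-n) <= 1 - 3/4 * 2^-n. *)
From HB Require Import structures.
From mathcomp Require Import all_boot all_order all_algebra.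
From mathcomp Require Import all_classical all_reals all_analysis.
From mathcomp Require Import measurable_realfun lra ring.

Set Implicit Arguments.
Unset Strict Implicit.
Unset Printing Implicit Defensive.

Import Order.TTheory GRing.Theory Num.Theory.
Local Open Scope ring_scope.

Section UpperCentral.
Local Open Scope classical_set_scope.
Local Open Scope group_scope.
Variable G : groupType.
Implicit Types (x y z g h : G) (m : nat).

Definition upper_central m : set G :=
  [set y | forall s : seq G, size s = m -> left_commutator (y :: s) = 1].

Lemma upper_central0 y : upper_central 0 y <-> y = 1.
Proof. by split=> [/(_ [::] erefl) | -> [|]]. Qed.

Lemma upper_centralS m y :
  upper_central m.+1 y <-> forall g, upper_central m [~ y, g].
Proof.
split=> [Hy g s hs | Hy [//|g s] [hs]]; first by apply: (Hy (g :: s)); rewrite /= hs.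
exact: Hy.
Qed.

Lemma not_upper_centralS m y :
  ~ upper_central m.+1 y -> exists g, ~ upper_central m [~ y, g].
Proof.
move=> Ny; apply: contrapT => Hy; apply/Ny/upper_centralS => g.
by apply: contrapT => Ng; apply: Hy; exists g.
Qed.

Definition normal_subgroup (N : set G) :=
  is_subgroup N /\ forall x h, N x -> N (x ^ h).

Ltac expand_comm := rewrite /commg /conjg ?invgM ?invgK ?mulgA ?mulgK ?mulgVK
  ?mulgV ?mulVg ?mul1g ?mulg1.

Lemma commMgJ y z g : [~ y * z, g] = [~ y, g] ^ z * [~ z, g].
Proof. by expand_comm. Qed.

Lemma commVgJ y g : [~ y^-1, g] = [~ y, g]^-1 ^ y^-1.
Proof. by expand_comm. Qed.

Lemma commJg y h g : [~ y ^ h, g] = [~ y, g ^ h^-1] ^ h.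
Proof. by expand_comm. Qed.

Lemma commgMJ y x1 x2 : [~ y, x1 * x2] = [~ y, x2] * [~ y, x1] ^ x2.
Proof. by expand_comm. Qed.

Lemma commgVJ y x : [~ y, x^-1] = [~ y, x]^-1 ^ x^-1.
Proof. by expand_comm. Qed.

Lemma upper_central_normal m : normal_subgroup (upper_central m).
Proof.
elim: m => [|m [[N1 NM NV] NJ]].
  split; first split.
  - exact/upper_central0.
  - by move=> x y /upper_central0 -> /upper_central0 ->; apply/upper_central0/mulg1.
  - by move=> x /upper_central0 ->; apply/upper_central0/invg1.
  - by move=> x h /upper_central0 ->; apply/upper_central0/conj1g.
split; first split.
- by apply/upper_centralS => g; rewrite comm1g.
- move=> x y /upper_centralS Hx /upper_centralS Hy; apply/upper_centralS => g.
  by rewrite commMgJ; apply: NM => //; apply: NJ.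
- move=> x /upper_centralS Hx; apply/upper_centralS => g.
  by rewrite commVgJ; apply/NJ/NV.
- move=> x h /upper_centralS Hx; apply/upper_centralS => g.
  by rewrite commJg; apply: NJ.
Qed.

Definition centralizer_mod m y : set G := [set x | upper_central m [~ y, x]].

Lemma centralizer_mod_subgroup m y : is_subgroup (centralizer_mod m y).
Proof.
have [[N1 NM NV] NJ] := upper_central_normal m.
split; rewrite /centralizer_mod /=.
- by rewrite commg1.
- by move=> x1 x2 h1 h2; rewrite commgMJ; apply: NM => //; apply: NJ.
- by move=> x h; rewrite commgVJ; apply/NJ/NV.
Qed.

Lemma centralizer_mod_id m y : centralizer_mod m y y.
Proof. by have [[N1 _ _] _] := upper_central_normal m; rewrite /centralizer_mod /= commgg. Qed.

Lemma upper_centralS_sub m y : upper_central m.+1 `<=` centralizer_mod m y.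
Proof.
have [[_ _ NV] _] := upper_central_normal m.
by move=> x /upper_centralS /(_ y) /NV; rewrite invgR.
Qed.

Lemma lower_central_sub_upper_central n :
  upper_central n = setT ->
  forall j, (j <= n)%N -> @lower_central G j `<=` upper_central (n - j).
Proof.
move=> Zn; elim=> [|j IH] ltjn; first by rewrite subn0 Zn.
move=> x /= Hx; apply: Hx; split; first exact: (upper_central_normal _).1.
move=> _ [a /(IH (ltnW ltjn)) Ha] [b _ <-].
by move: Ha; rewrite -subnSK // => /upper_centralS.
Qed.

Lemma nilpotent_class_le_upper_central n :
  upper_central n = setT -> nilpotent_class_le G n.
Proof.
move=> Zn; apply/seteqP; split.
  by move=> x /(lower_central_sub_upper_central Zn (leqnn n)); rewrite subnn => /upper_central0.
move=> _ ->; case: n Zn => [//|n] _ H [[H1 _ _] _].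
exact: H1.
Qed.

End UpperCentral.

Lemma closed_measurable (T : ptopologicalType) (A : set T) :
  closed A -> measurable (A : set (g_sigma_algebraType (@open T))).
Proof.
move=> cA; rewrite -(setCK A); apply: measurableC.
by apply: sub_gen_smallest; rewrite /= openC.
Qed.

Section CompactGroup.
Local Open Scope classical_set_scope.
Local Open Scope group_scope.
Variable G : topGroupType.
Hypothesis cG : compact_group G.

Lemma continuous_mulg (T : topologicalType) (f h : T -> G) :
  continuous f -> continuous h -> continuous (fun x => f x * h x).
Proof.
move=> cf ch x; apply: continuous2_cvg; [|exact: cf|exact: ch].
by case: cG => cm _ _ _; exact: (cm (f x, h x)).
Qed.

Lemma continuous_invg (T : topologicalType) (f : T -> G) :
  continuous f -> continuous (fun x => (f x)^-1).
Proof. by case: cG => _ ci _ _ cf x; exact: (continuous_comp (cf x) (ci (f x))). Qed.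

Lemma continuous_commg (T : topologicalType) (f h : T -> G) :
  continuous f -> continuous h -> continuous (fun x => [~ f x, h x]).
Proof.
move=> cf ch; rewrite /commg /conjg.
by do 2![apply: continuous_mulg; first exact: continuous_invg]; apply: continuous_mulg.
Qed.

Lemma continuous_left_commutator (T : topologicalType) (f : T -> G) (s : seq G) :
  continuous f -> continuous (fun x => left_commutator (f x :: s)).
Proof.
elim: s f => [//|a s IH] f cf /=.
apply: (IH (fun x => [~ f x, a])).
by apply: continuous_commg => //; exact: cst_continuous.
Qed.

Lemma closed_upper_central m : closed (@upper_central G m).
Proof.
have -> : @upper_central G m = \bigcap_(s in [set s : seq G | size s = m])
    ((fun y => left_commutator (y :: s)) @^-1` [set 1]).
  by apply/seteqP; split => y Hy s hs; exact: Hy.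
apply: closed_bigI => s _; apply: preimage_closed.
  by move=> y _; apply: continuous_left_commutator => x; exact: cvg_id.
by case: cG => _ _ hG _; exact/accessible_closed_set1/hausdorff_accessible.
Qed.

Lemma closed_centralizer_mod m (y : G) : closed (centralizer_mod m y).
Proof.
apply: preimage_closed; last exact: closed_upper_central.
move=> x _; apply: (@continuous_commg _ (fun _ => y) id); first exact: cst_continuous.
by move=> z; exact: cvg_id.
Qed.

Lemma closed_lmulg (A : set G) g : closed A -> closed [set g * x | x in A].
Proof.
move=> cA; have -> : [set g * x | x in A] = (fun x => g^-1 * x) @^-1` A.
  apply/seteqP; split => x; first by move=> [a Aa <-]; rewrite /= mulKg.
  by move=> /= Ax; exists (g^-1 * x) => //; rewrite mulVKg.
apply: preimage_closed => // x _.
apply: (@continuous_mulg _ (fun _ => g^-1) id); first exact: cst_continuous.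
by move=> z; exact: cvg_id.
Qed.

End CompactGroup.

Lemma inv_exp2_bounds (R : numFieldType) k : 0 < (2 ^+ k : R)^-1 <= 1.
Proof. by rewrite invr_gt0 exprn_gt0 // invf_le1 ?exprn_gt0 // exprn_ege1 ?ler1n. Qed.

(* No measurability is needed: the integral of a nonnegative function is the
   supremum of the integrals of the simple functions below it. *)
Lemma ge0_le_integralT d (T : measurableType d) (R : realType)
    (mu : measure T R) (f g : T -> \bar R) :
  (forall x, 0 <= f x)%E -> (forall x, f x <= g x)%E ->
  (\int[mu]_(x in [set: T]) f x <= \int[mu]_(x in [set: T]) g x)%E.
Proof.
move=> f0 fg.
have g0 x : (0 <= g x)%E by exact: le_trans (f0 x) (fg x).
rewrite (ge0_integralTE mu f0) (ge0_integralTE mu g0).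
apply: ereal_sup_le => _ [h hf <-]; exists h => //= x.
exact: le_trans (hf x) (fg x).
Qed.

Section Haar.
Local Open Scope classical_set_scope.
Variables (R : realType) (G : topGroupType) (mu : measure (borelType G) R).
Hypotheses (cG : compact_group G) (hmu : normalized_haar mu).

Definition prob (A : set G) : R := fine (mu A).

Lemma muT : mu [set: borelType G] = 1%E.
Proof. by case: hmu. Qed.

Lemma muE (A : set (borelType G)) : measurable A -> mu A = (prob A)%:E.
Proof.
move=> mA; rewrite /prob fineK // ge0_fin_numE //.
apply: (@le_lt_trans _ _ 1%E); last by rewrite ltry.
by rewrite -muT; apply: le_measure; rewrite ?inE.
Qed.

Lemma probT : prob [set: G] = 1.
Proof. by rewrite /prob muT. Qed.

(* A and its translate y A are disjoint subsets of K of equal measure. *)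
Lemma prob_subgroup_le (A K : set G) (y : G) :
  is_subgroup A -> is_subgroup K -> closed A -> closed K ->
  A `<=` K -> K y -> ~ A y -> 2 * prob A <= prob K.
Proof.
move=> [_ AM AV] [_ KM _] cA cK AK Ky Ny.
pose yA : set (borelType G) := [set monoid.mul y x | x in A].
have mA : measurable (A : set (borelType G)) by exact: closed_measurable.
have mK : measurable (K : set (borelType G)) by exact: closed_measurable.
have myA : measurable yA.
  by apply: closed_measurable; exact: closed_lmulg.
have disj : A `&` yA = set0.
  apply/seteqP; split => // x [Ax [a Aa xE]]; apply: Ny.
  by rewrite -(monoid.mulgK a y) xE; apply: AM => //; apply: AV.
have AyAK : A `|` yA `<=` K by move=> x [/AK // | [a /AK Ka <-]]; exact: KM.
have muyA : mu yA = mu A by case: hmu => _ inv _; exact: inv.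
have : (mu A + mu A <= mu K)%E.
  rewrite -[X in (_ + X)%E]muyA -measureU //.
  by apply: le_measure; rewrite ?inE //; exact: measurableU.
by rewrite (muE mA) (muE mK) -EFinD lee_fin mulr2n mulrDl mul1r.
Qed.

Lemma prob_proper_subgroup (A : set G) (y : G) :
  is_subgroup A -> closed A -> ~ A y -> 2 * prob A <= 1.
Proof.
move=> sA cA Ny; rewrite -[leRHS]probT.
have sT : is_subgroup [set: G] by [].
exact: prob_subgroup_le sA sT cA closedT _ I Ny.
Qed.

Lemma integral_le_indic (f : G -> \bar R) (B : set G) (t : R) :
  closed B -> 0 <= t <= 1 ->
  (forall x, 0 <= f x <= 1)%E -> (forall x, ~ B x -> f x <= (1 - t)%:E)%E ->
  (\int[mu]_(x in [set: borelType G]) f x <= (1 - t * (1 - prob B))%:E)%E.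
Proof.
move=> cB /andP[t0 t1] f01 fB.
have mB : measurable (B : set (borelType G)) by exact: closed_measurable.
have ind0 (x : G) : (0 <= (\1_B x)%:E :> \bar R)%E.
  by rewrite lee_fin indicE; case: (_ \in _).
apply: (@le_trans _ _ (\int[mu]_(x in [set: borelType G])
    ((1 - t)%:E + t%:E * (\1_B x)%:E))%E).
  apply: ge0_le_integralT => [x|x]; first by case/andP: (f01 x).
  rewrite indicE; case: (pselect (B x)) => Bx.
    by rewrite mem_set // mule1 -EFinD subrK; case/andP: (f01 x).
  by rewrite memNset // mule0 adde0; exact: fB.
rewrite ge0_integralD //; first last.
- by apply: measurable_funeM; apply/measurable_EFinP; exact: measurable_indic.
- by move=> x _; rewrite mule_ge0 // lee_fin.
- by move=> x _; rewrite lee_fin subr_ge0.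
rewrite integral_cst // muT mule1 ge0_integralZl_EFin //; last first.
  by apply/measurable_EFinP; exact: measurable_indic.
rewrite integral_indic // setIT (muE mB) -EFinM -EFinD lee_fin.
lra.
Qed.

End Haar.

Section CommutatorProbability.
Local Open Scope classical_set_scope.
Variables (R : realType) (G : topGroupType) (mu : measure (borelType G) R).
Hypotheses (cG : compact_group G) (hmu : normalized_haar mu).

Definition comm_prob (k : nat) (y : G) : \bar R :=
  iter_integral mu k (fun s => (\1_[set t | left_commutator t = @monoid.one G] (y :: s))%:E).

Lemma comm_probS k y :
  comm_prob k.+1 y = (\int[mu]_(x in [set: borelType G]) comm_prob k (commg y x))%E.
Proof. by []. Qed.

Lemma dn_comm_prob n : dn mu n = (\int[mu]_(x in [set: borelType G]) comm_prob n x)%E.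
Proof. by []. Qed.

Lemma comm_prob_ge0_le1 k y : (0 <= comm_prob k y <= 1)%E.
Proof.
elim: k y => [|k IH] y.
  by rewrite /comm_prob /= !lee_fin indicE; case: (_ \in _); rewrite lexx ler01.
apply/andP; split; rewrite comm_probS.
  by apply: integral_ge0 => x _; case/andP: (IH (commg y x)).
apply: le_trans (@ge0_le_integralT _ _ _ mu _ (fun _ => 1%E) _ _) _.
- by move=> x; case/andP: (IH (commg y x)).
- by move=> x; case/andP: (IH (commg y x)).
by rewrite integral_cst // (muT hmu) mule1.
Qed.

Lemma comm_prob_le k y :
  ~ upper_central k y -> (comm_prob k y <= (1 - (2 ^+ k)^-1)%:E)%E.
Proof.
elim: k y => [|k IH] y Ny.
  rewrite /comm_prob /= expr0 invr1 subrr lee_fin indicE memNset //.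
  by move=> /= /(upper_central0 y).
have [g Ng] := not_upper_centralS Ny.
have half := prob_proper_subgroup cG hmu (@centralizer_mod_subgroup _ k y)
  (@closed_centralizer_mod _ cG k y) Ng.
have [t0 t1] := andP (@inv_exp2_bounds R k).
rewrite comm_probS.
apply: le_trans (integral_le_indic hmu (t := (2 ^+ k)^-1)
  (@closed_centralizer_mod _ cG k y) _ (fun x => comm_prob_ge0_le1 k _) _) _.
- by rewrite (ltW t0) t1.
- by move=> x; exact: IH.
rewrite lee_fin exprS invfM.
set t := (2 ^+ k : R)^-1 in t0 t1 half *; set b := prob _ _ in half *.
have : 0 <= (1/2 - b) * t by apply: mulr_ge0; lra.
lra.
Qed.

(* upper_central m.+1 lies in the closed subgroup centralizer_mod m y, which
   contains y but is proper since y is not in upper_central m.+1. *)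
Lemma prob_upper_central_le m (y : G) :
  ~ upper_central m.+1 y -> 4 * prob mu (@upper_central G m.+1) <= 1.
Proof.
move=> Ny; have [g Ng] := not_upper_centralS Ny.
have sub := prob_subgroup_le cG hmu (@upper_central_normal G m.+1).1
  (@centralizer_mod_subgroup _ m y) (@closed_upper_central _ cG m.+1)
  (@closed_centralizer_mod _ cG m y) (@upper_centralS_sub _ m y)
  (@centralizer_mod_id _ m y) Ny.
have := prob_proper_subgroup cG hmu (@centralizer_mod_subgroup _ m y)
  (@closed_centralizer_mod _ cG m y) Ng.
lra.
Qed.

End CommutatorProbability.

Theorem corollary4p1 (R : realType) (G : topGroupType)
    (mu : measure (borelType G) R) (n : nat) :
  (1 <= n)%N ->
  compact_group G ->
  normalized_haar mu ->
  ~ nilpotent_class_le G n ->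
  (dn mu n <= ((2 ^+ (n + 2) - 3) / 2 ^+ (n + 2) : R)%:E)%E.
Proof.
move=> n1 cG hmu nnil.
have [y Ny] : exists y : G, ~ upper_central n y.
  apply: contrapT => H; apply/nnil/nilpotent_class_le_upper_central/seteqP.
  by split=> // y _; apply: contrapT => Ny; apply: H; exists y.
case: n n1 nnil Ny => // m _ _ Ny.
have quarter := prob_upper_central_le cG hmu Ny.
have [t0 t1] := andP (@inv_exp2_bounds R m.+1).
rewrite dn_comm_prob.
apply: le_trans (integral_le_indic hmu (t := (2 ^+ m.+1)^-1)
  (@closed_upper_central _ cG m.+1) _ (fun x => comm_prob_ge0_le1 hmu m.+1 x)
  (fun x => comm_prob_le cG hmu (k := m.+1) (y := x))) _.
  by rewrite (ltW t0) t1.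
have -> : ((2 ^+ (m.+1 + 2) - 3) / 2 ^+ (m.+1 + 2) : R) = 1 - 3 / 4 * (2 ^+ m.+1)^-1.
  by rewrite exprD; field; rewrite expf_neq0.
rewrite lee_fin; set t := (2 ^+ m.+1 : R)^-1 in t0 t1 *.
have : 0 <= (1/4 - prob mu (upper_central m.+1)) * t by apply: mulr_ge0; lra.
lra.
Qed.
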